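(* Let $k$ be a field, $A$ and $B$ $k$-algebras, $X$ an $(A,B)$-bimodule on which $k$ acts centrally and which is finitely generated as a left $A$-module and as a right $B$-module, and $\Lambda=\begin{pmatrix}A&X\\0&B\end{pmatrix}$ with $P_1=[A\ X]$, $P_2=[0\ B]$. For $s,t\ge0$ and $x\in M_{s,t}(X)$ let $P_x$ be the 2-term complex $P_2^{\oplus t}\xrightarrow{x(\cdot)}P_1^{\oplus s}$ (degrees $-1,0$) in $K^b(\operatorname{proj}\Lambda)$. Let $s,t,u,v\ge0$, $x\in M_{s,t}(X)$, $y\in M_{u,v}(X)$. (a) There is an exact sequence $M_{u,s}(A)\oplus M_{v,t}(B)\to M_{u,t}(X)\to\operatorname{Hom}_{K^b(\operatorname{proj}\Lambda)}(P_x,P_y[1])\to0$, where the first map is $(a,b)\mapsto ax+yb$. (b) In particular, $P_x$ is presilting if and only if $M_{s,t}(X)=M_s(A)x+xM_t(B)$.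
   Context: $M_{s,t}(X)$ denotes $s\times t$ matrices with entries in $X$; $\operatorname{Hom}_\Lambda(P_2^{\oplus t},P_1^{\oplus s})\cong M_{s,t}(X)$ via left multiplication. A complex $T$ is presilting if $\operatorname{Hom}(T,T[\ell])=0$ for all $\ell>0$. *)

From HB Require Import structures.
From mathcomp Require Import all_boot all_order all_algebra.
Set Implicit Arguments. Unset Strict Implicit. Unset Printing Implicit Defensive.
Import Order.TTheory GRing.Theory Num.Theory.
Local Open Scope ring_scope.

Definition bimodule_axioms (A B : nzRingType) (X : zmodType)
  (la : A -> X -> X) (ra : X -> B -> X) : Prop :=
  [/\ (forall a x y, la a (x + y) = la a x + la a y),
      (forall a a' x, la (a + a') x = la a x + la a' x),
      (forall x, la 1 x = x) &
      (forall a a' x, la (a * a') x = la a (la a' x))] /\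
  [/\ (forall b x y, ra (x + y) b = ra x b + ra y b),
      (forall b b' x, ra x (b + b') = ra x b + ra x b'),
      (forall x, ra x 1 = x) &
      (forall b b' x, ra x (b * b') = ra (ra x b) b')] /\
  (forall a b x, la a (ra x b) = ra (la a x) b).

Definition k_central (k : nzRingType) (A B : algType k) (X : zmodType)
  (la : A -> X -> X) (ra : X -> B -> X) : Prop :=
  forall (c : k) (x : X), la (c%:A) x = ra x (c%:A).

Definition fg_left (A : nzRingType) (X : zmodType) (la : A -> X -> X) : Prop :=
  exists gs : seq X, forall x : X, exists cs : seq A,
    size cs = size gs /\ x = \sum_(i < size gs) la (nth 0 cs i) (nth 0 gs i).

Definition fg_right (B : nzRingType) (X : zmodType) (ra : X -> B -> X) : Prop :=
  exists gs : seq X, forall x : X, exists cs : seq B,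
    size cs = size gs /\ x = \sum_(i < size gs) ra (nth 0 gs i) (nth 0 cs i).

Section Triangular.
Variables (A B : nzRingType) (X : zmodType) (la : A -> X -> X) (ra : X -> B -> X).

Definition mulAX m n p (a : 'M[A]_(m, n)) (x : 'M[X]_(n, p)) : 'M[X]_(m, p) :=
  \matrix_(i, j) \sum_(l < n) la (a i l) (x l j).
Definition mulXB m n p (x : 'M[X]_(m, n)) (b : 'M[B]_(n, p)) : 'M[X]_(m, p) :=
  \matrix_(i, j) \sum_(l < n) ra (x i l) (b l j).

(* Objects of add(P_1 (+) P_2) in proj Lambda, Lambda = [[A, X], [0, B]]:
   the pair (a, b) stands for P_1^{(+)a} (+) P_2^{(+)b}.
   A Lambda-linear map P_1^a (+) P_2^b -> P_1^c (+) P_2^d is left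
   multiplication by a block matrix [[hA, hX], [0, hB]] with
   hA in M_{c,a}(A), hX in M_{c,b}(X), hB in M_{d,b}(B)
   (Hom(P_1,P_1) = A, Hom(P_2,P_1) = X, Hom(P_2,P_2) = B, Hom(P_1,P_2) = 0). *)
Record thom (p q : nat * nat) := THom {
  hA : 'M[A]_(q.1, p.1);
  hX : 'M[X]_(q.1, p.2);
  hB : 'M[B]_(q.2, p.2) }.

Definition homcomp p q r (g : thom q r) (f : thom p q) : thom p r :=
  THom (hA g *m hA f) (mulAX (hA g) (hX f) + mulXB (hX g) (hB f)) (hB g *m hB f).
Definition homadd p q (f g : thom p q) : thom p q :=
  THom (hA f + hA g) (hX f + hX g) (hB f + hB g).
Definition homopp p q (f : thom p q) : thom p q :=
  THom (- hA f) (- hX f) (- hB f).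
Definition homsub p q (f g : thom p q) : thom p q := homadd f (homopp g).

Record cplx := Cplx {
  cobj : int -> nat * nat;
  cd : forall i : int, thom (cobj i) (cobj (i + 1)) }.

Definition shift (F : cplx) : cplx :=
  @Cplx (fun i => cobj F (i + 1)) (fun i => homopp (cd F (i + 1))).

Definition is_chain (F G : cplx) (f : forall i, thom (cobj F i) (cobj G i)) : Prop :=
  forall i : int, homcomp (cd G i) (f i) = homcomp (f (i + 1)) (cd F i).

Definition nullhtpy (F G : cplx) (f : forall i, thom (cobj F i) (cobj G i)) : Prop :=
  exists h : forall i : int, thom (cobj F (i + 1)) (cobj G i),
    forall i : int,
      f (i + 1) = homadd (homcomp (cd G i) (h i)) (homcomp (h (i + 1)) (cd F (i + 1))).

Definition presilting (T : cplx) : Prop :=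
  forall l : nat, (0 < l)%N ->
    forall f : forall i, thom (cobj T i) (cobj (iter l shift T) i),
      is_chain f -> nullhtpy f.

Definition mxget m n (x : 'M[X]_(m, n)) (r c : nat) : X :=
  match insub r, insub c with
  | Some r', Some c' => x r' c'
  | _, _ => 0
  end.

Definition Pobj (s t : nat) (i : int) : nat * nat :=
  if i == 0 then (s, 0%N) else if i == -1 then (0%N, t) else (0%N, 0%N).

Definition Pcx (s t : nat) (x : 'M[X]_(s, t)) : cplx :=
  @Cplx (Pobj s t) (fun i =>
    THom 0 (\matrix_(r, c) (if i == -1 then mxget x r c else 0)) 0).

End Triangular.

From HB Require Import structures.
From mathcomp Require Import all_boot all_order all_algebra zify.
Set Implicit Arguments. Unset Strict Implicit. Unset Printing Implicit Defensive.
Import GRing.Theory.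
Local Open Scope ring_scope.

(* P_x lives in degrees -1, 0 and P_y[1] in degrees -2, -1, so a degreewise
   family of maps P_x -> P_y[1] has a single possibly nonzero component, a map
   P_2^t -> P_1^u, that is a matrix z in M_{u,t}(X), and every such family is a
   chain map.  A homotopy has two relevant components, a : P_1^s -> P_1^u and
   b : P_2^t -> P_2^v, and the homotopy relation in degree -1 reads
   z = a x - y b, the sign coming from the differential of the shift.  For
   l >= 2 the supports of P_x and P_x[l] are disjoint, so presilting only asks
   for the case l = 1. *)

Section BimoduleActions.
Variables (A B : nzRingType) (X : zmodType) (la : A -> X -> X) (ra : X -> B -> X).
Hypothesis hbim : bimodule_axioms la ra.

Lemma laDl a a' z : la (a + a') z = la a z + la a' z.
Proof. by case: hbim => [[]]. Qed.
Lemma laDr a z z' : la a (z + z') = la a z + la a z'.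
Proof. by case: hbim => [[]]. Qed.
Lemma raDl b z z' : ra (z + z') b = ra z b + ra z' b.
Proof. by case: hbim => [_ [[]]]. Qed.
Lemma raDr b b' z : ra z (b + b') = ra z b + ra z b'.
Proof. by case: hbim => [_ [[]]]. Qed.

Lemma la0l z : la 0 z = 0.
Proof. by apply: (addrI (la 0 z)); rewrite -laDl !addr0. Qed.
Lemma la0r a : la a 0 = 0.
Proof. by apply: (addrI (la a 0)); rewrite -laDr !addr0. Qed.
Lemma ra0l b : ra 0 b = 0.
Proof. by apply: (addrI (ra 0 b)); rewrite -raDl !addr0. Qed.
Lemma ra0r z : ra z 0 = 0.
Proof. by apply: (addrI (ra z 0)); rewrite -raDr !addr0. Qed.

Lemma raNN z b : ra (- z) (- b) = ra z b.
Proof.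
apply: (addIr (ra z (- b))).
by rewrite -raDl addNr ra0l -raDr addrN ra0r.
Qed.

Lemma mul0AX m n p (z : 'M[X]_(n, p)) : mulAX la (0 : 'M[A]_(m, n)) z = 0.
Proof. by apply/matrixP => i j; rewrite !mxE big1 // => l _; rewrite mxE la0l. Qed.
Lemma mulAX0 m n p (a : 'M[A]_(m, n)) : mulAX la a (0 : 'M[X]_(n, p)) = 0.
Proof. by apply/matrixP => i j; rewrite !mxE big1 // => l _; rewrite mxE la0r. Qed.
Lemma mul0XB m n p (b : 'M[B]_(n, p)) : mulXB ra (0 : 'M[X]_(m, n)) b = 0.
Proof. by apply/matrixP => i j; rewrite !mxE big1 // => l _; rewrite mxE ra0l. Qed.
Lemma mulXB0 m n p (z : 'M[X]_(m, n)) : mulXB ra z (0 : 'M[B]_(n, p)) = 0.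
Proof. by apply/matrixP => i j; rewrite !mxE big1 // => l _; rewrite mxE ra0r. Qed.

End BimoduleActions.

Section Complexes.
Variables (A B : nzRingType) (X : zmodType) (la : A -> X -> X) (ra : X -> B -> X).

Lemma thom_ext p q (f g : thom A B X p q) :
  hA f = hA g -> hX f = hX g -> hB f = hB g -> f = g.
Proof. by case: f => ? ? ?; case: g => ? ? ? /= -> -> ->. Qed.

Lemma thom_eq0 p q (f g : thom A B X p q) :
  (p == (0, 0)%N) || (q == (0, 0)%N) -> f = g.
Proof.
by move=> /orP[] /eqP e; subst; apply: thom_ext; rewrite /=
  ?[LHS]thinmx0 ?[RHS]thinmx0 ?[LHS]flatmx0 ?[RHS]flatmx0.
Qed.

Lemma cobj_iter_shift (F : cplx A B X) l i :
  cobj (iter l (@shift A B X) F) i = cobj F (i + l%:Z).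
Proof.
elim: l i => [|l IH] i /=; first by rewrite addr0.
by rewrite IH -addrA -intS addrC.
Qed.

Definition thom0 {p q} : thom A B X p q := THom 0 0 0.

Lemma nullhtpy_ext (F G : cplx A B X) f g :
  (forall i, f i = g i) -> nullhtpy la ra (F := F) (G := G) f -> nullhtpy la ra g.
Proof. by move=> fg [h H]; exists h => i; rewrite -fg H. Qed.

Hypothesis hbim : bimodule_axioms la ra.

Lemma homcomp0r p q r (g : thom A B X q r) : homcomp la ra g (@thom0 p q) = thom0.
Proof. by rewrite /homcomp /= !mulmx0 (mulAX0 hbim) (mulXB0 hbim) addr0. Qed.
Lemma homcomp0l p q r (f : thom A B X p q) : homcomp la ra (@thom0 q r) f = thom0.
Proof. by rewrite /homcomp /= !mul0mx (mul0AX hbim) (mul0XB hbim) addr0. Qed.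

Lemma nullhtpy0 (F G : cplx A B X) : nullhtpy la ra (fun i => @thom0 (cobj F i) (cobj G i)).
Proof.
by exists (fun i => thom0) => i; rewrite homcomp0l homcomp0r; apply: thom_ext; rewrite /= addr0.
Qed.

Lemma nullhtpy_subrr (F G : cplx A B X) (f : forall i, thom A B X (cobj F i) (cobj G i)) :
  nullhtpy la ra (fun i => homsub (f i) (f i)).
Proof.
apply: nullhtpy_ext (nullhtpy0 F G) => i.
by apply: thom_ext; rewrite /= subrr.
Qed.

End Complexes.
Arguments thom0 {A B X p q}.

Section MatrixAtDegree.
Variable V : zmodType.

Lemma mxget_ord m n (M : 'M[V]_(m, n)) (r : 'I_m) (c : 'I_n) : mxget M r c = M r c.
Proof. by rewrite /mxget !valK. Qed.

(* Dimension-polymorphic: [m', n'] need only agree with [m, n] in degree [d],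
   and [mxget] pads with zeros elsewhere. *)
Definition mx_at_deg m n (d : int) (M : 'M[V]_(m, n)) (i : int) {m' n'} : 'M[V]_(m', n') :=
  \matrix_(r, c) (if i == d then mxget M r c else 0).

Lemma mx_at_deg_id m n d (M : 'M[V]_(m, n)) : mx_at_deg d M d = M.
Proof. by apply/matrixP => r c; rewrite mxE eqxx mxget_ord. Qed.

End MatrixAtDegree.

Lemma Pobj_eq0 s t (i : int) :
  (Pobj s t i == (0, 0)%N) = ((i != 0) || (s == 0%N)) && ((i != -1) || (t == 0%N)).
Proof.
rewrite /Pobj; have [->|_] := eqVneq i 0; first by rewrite xpair_eqE andbT.
by case: (eqVneq i (-1)); rewrite ?xpair_eqE ?eqxx.
Qed.

Section TwoTermComplexes.
Variables (A B : nzRingType) (X : zmodType) (la : A -> X -> X) (ra : X -> B -> X).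
Hypothesis hbim : bimodule_axioms la ra.

Lemma nullhtpy_Pcx_iter_shift s t (x : 'M[X]_(s, t)) l
    (f : forall i, thom A B X (cobj (Pcx A B x) i)
                              (cobj (iter l.+2 (@shift A B X) (Pcx A B x)) i)) :
  nullhtpy la ra f.
Proof.
exists (fun i => thom0) => i.
apply: thom_eq0; rewrite /= !cobj_iter_shift !Pobj_eq0; lia.
Qed.

Variables (s t u v : nat) (x : 'M[X]_(s, t)) (y : 'M[X]_(u, v)).

Local Notation family :=
  (forall i : int, thom A B X (cobj (Pcx A B x) i) (cobj (shift (Pcx A B y)) i)).

Definition chain_of_mx (z : 'M[X]_(u, t)) : family :=
  fun i => THom 0 (mx_at_deg (-1) z i) 0.

Definition mx_of_family (f : family) : 'M[X]_(u, t) := hX (f (-1)).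

Lemma is_chain_Pcx_shift (f : family) : is_chain la ra f.
Proof. by move=> i; apply: thom_eq0; rewrite /= !Pobj_eq0; lia. Qed.

Lemma mx_of_familyK (f : family) i : chain_of_mx (mx_of_family f) i = f i.
Proof.
have [->|i_neq] := eqVneq i (-1); last by apply: thom_eq0; rewrite /= !Pobj_eq0; lia.
apply: thom_ext => /=.
- by apply/matrixP => ? [].
- exact: mx_at_deg_id.
- by apply/matrixP => [[]].
Qed.

Lemma chain_of_mxD z1 z2 i :
  chain_of_mx (z1 + z2) i = homadd (chain_of_mx z1 i) (chain_of_mx z2 i).
Proof.
by rewrite -(mx_of_familyK (fun i => homadd _ _) i) /mx_of_family /= !mx_at_deg_id.
Qed.

Lemma homotopy_formula_deg_m1
    (h : forall i : int, thom A B X (cobj (Pcx A B x) (i + 1)) (cobj (shift (Pcx A B y)) i)) :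
  hX (homadd (homcomp la ra (cd (shift (Pcx A B y)) (-2)) (h (-2)))
             (homcomp la ra (h (-1)) (cd (Pcx A B x) (-1))))
  = mulAX la (hA (h (-1))) x + mulXB ra y (- hB (h (-2))).
Proof.
apply/matrixP => r c; rewrite !mxE !big_ord0 add0r addr0 addrC.
congr (_ + _); apply: eq_bigr => l _; rewrite !mxE /= !mxget_ord //.
by rewrite -(raNN hbim) opprK.
Qed.

Lemma nullhtpy_chain_of_mxP z :
  nullhtpy la ra (chain_of_mx z) <->
  exists (a : 'M[A]_(u, s)) (b : 'M[B]_(v, t)), z = mulAX la a x + mulXB ra y b.
Proof.
split=> [[h /(_ (-2)) /(congr1 (@hX _ _ _ _ _)) hz]|[a [b ->]]].
  exists (hA (h (-1))), (- hB (h (-2))).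
  rewrite -homotopy_formula_deg_m1 -[LHS](mx_at_deg_id (-1)); exact: hz.
pose h i : thom A B X (cobj (Pcx A B x) (i + 1)) (cobj (shift (Pcx A B y)) i) :=
  THom (mx_at_deg (-1) a i) 0 (mx_at_deg (-2) (- b) i).
exists h => i.
have [->|i_neq] := eqVneq i (-2); last by apply: thom_eq0; rewrite /= !Pobj_eq0; lia.
apply: thom_ext.
- by apply/matrixP => ? [].
- apply: etrans _ (esym (homotopy_formula_deg_m1 h)).
  by rewrite /= !mx_at_deg_id opprK.
- by apply/matrixP => [[]].
Qed.

End TwoTermComplexes.
Arguments chain_of_mx {A B X s t u v} x y z i.

Theorem proposition3p9 (k : fieldType) (A B : algType k) (X : zmodType)
  (la : A -> X -> X) (ra : X -> B -> X)
  (hbim : bimodule_axioms la ra) (hcen : k_central la ra)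
  (hfgl : fg_left la) (hfgr : fg_right ra)
  (s t u v : nat) (x : 'M[X]_(s, t)) (y : 'M[X]_(u, v)) :
  (exists phi : 'M[X]_(u, t) ->
       forall i : int, thom A B X (cobj (Pcx A B x) i) (cobj (shift (Pcx A B y)) i),
     [/\ (forall z, is_chain la ra (phi z)),
         (forall z1 z2 i, phi (z1 + z2) i = homadd (phi z1 i) (phi z2 i)),
         (forall f : forall i : int,
              thom A B X (cobj (Pcx A B x) i) (cobj (shift (Pcx A B y)) i),
            is_chain la ra f ->
            exists z, nullhtpy la ra (fun i => homsub (f i) (phi z i))) &
         (forall z, nullhtpy la ra (phi z) <->
            exists (a : 'M[A]_(u, s)) (b : 'M[B]_(v, t)),
              z = mulAX la a x + mulXB ra y b)])
  /\
  (presilting la ra (Pcx A B x) <->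
     forall z : 'M[X]_(s, t),
       exists (a : 'M[A]_s) (b : 'M[B]_t), z = mulAX la a x + mulXB ra x b).
Proof.
(* [hcen], [hfgl] and [hfgr] only serve in the paper to make Lambda a
   finite-dimensional algebra; here proj Lambda is modelled by block matrices. *)
split.
  exists (chain_of_mx x y); split.
  - move=> z; exact: is_chain_Pcx_shift.
  - exact: chain_of_mxD.
  - move=> f _; exists (mx_of_family f).
    by apply: nullhtpy_ext (nullhtpy_subrr hbim f) => i; rewrite mx_of_familyK.
  - exact: nullhtpy_chain_of_mxP.
split=> [presT z | decomp [|[|l]] // _ f _].
- apply/(nullhtpy_chain_of_mxP hbim).
  exact: presT 1%N erefl _ (is_chain_Pcx_shift la ra _).
- apply: nullhtpy_ext (mx_of_familyK f) _.
  exact/(nullhtpy_chain_of_mxP hbim).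
- exact: nullhtpy_Pcx_iter_shift.
Qed.
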